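(* Let $\gamma\in(0,1)$ be a constant. Consider Algorithm MWHVC (described in the context) run in the CONGEST model on a hypergraph $G=(V,E)$ of rank $f$ and maximum degree $\Delta\ge 3$ with nonnegative vertex weights $w$, with parameters $\varepsilon\in(0,1]$, $\beta=\varepsilon/(f+\varepsilon)$ and multiplier $$\alpha=\begin{cases}\left(\frac{\log\Delta}{\log\log\Delta}\right)^{1-\gamma} & \text{if } \frac{f}{\beta}<\left(\frac{\log\Delta}{\log\log\Delta}\right)^{\gamma},\\ 2 & \text{otherwise.}\end{cases}$$ Then the round complexity of the algorithm is $$O\left(\frac{\log\Delta}{\log\log\Delta}+\left(\frac{f^2}{\varepsilon}\right)^{1/\gamma}\cdot\log\log\Delta\right).$$
   Context: Let $G=(V,E)$ be a hypergraph with $n=|V|$: each hyperedge is a nonempty subset of $V$ of size at most $f$ (rank $f$). Vertices have nonnegative weights $w(v)$; weights and degrees are assumed polynomial in $n$. For $v\in V$, $E(v)=\{e\in E: v\in e\}$; $\Delta=\max_v |E(v)|\ge 3$. A hyperedge $e$ is covered by $C\subseteq V$ if $e\cap C\neq\emptyset$. The computation is distributed in synchronous rounds (CONGEST: messages of $O(\log n)$ bits) on the bipartite network with node set $V\cup E$ and a link between $v$ and $e$ iff $v\in e$. Parameters: $\varepsilon\in(0,1]$, $\beta=\varepsilon/(f+\varepsilon)$, and a multiplier $\alpha>1$. Algorithm MWHVC: Initialize $C\gets\emptyset$ and $E'(v)\gets E(v)$ for every $v$. Iteration $0$: every hyperedge $e$ sets $\mathrm{deal}_0(e)=\beta\cdot\min_{v\in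 e} w(v)/|E(v)|$ and $\delta_0(e)=\mathrm{deal}_0(e)$. For $i=1,2,\dots$: (a) every vertex $v\notin C$ (not terminated) checks whether $\sum_{e\in E(v)}\delta_{i-1}(e)\ge(1-\beta)w(v)$; if so, $v$ joins $C$, tells every $e\in E'(v)$ that $e$ is covered, and terminates. (b) Every uncovered hyperedge that receives such a message becomes covered, informs all its vertices, and terminates. (c) Every vertex $v\notin C$ that is told $e$ is covered sets $E'(v)\gets E'(v)\setminus\{e\}$; if $E'(v)=\emptyset$, $v$ terminates without joining $C$. (d) Every vertex $v\notin C$ sends ''raise'' to all $e\in E'(v)$ if $\sum_{e\in E'(v)}\mathrm{deal}_{i-1}(e)\le(\beta/\alpha)w(v)$, and otherwise sends ''stuck'' to all $e\in E'(v)$. (e) Every uncovered hyperedge $e$ sets $\mathrm{deal}_i(e)=\mathrm{deal}_{i-1}(e)$ if it received some ''stuck'' message, and $\mathrm{deal}_i(e)=\alpha\cdot\mathrm{deal}_{i-1}(e)$ otherwise, and $\delta_i(e)=\delta_{i-1}(e)+\mathrm{deal}_i(e)$, sending the new deal to its vertices. A vertex terminates when it is in $C$ or all its hyperedges are covered; a hyperedge terminates when covered. *)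

From HB Require Import structures.
From mathcomp Require Import all_boot all_order all_algebra.
From mathcomp Require Import all_classical all_reals all_analysis.
Set Implicit Arguments. Unset Strict Implicit. Unset Printing Implicit Defensive.
Import Order.TTheory GRing.Theory Num.Theory.
Local Open Scope ring_scope.

Section MWHVC.
Variable R : realType.
Variable V : finType.
Variable H : {set {set V}}.
Variable w : V -> R.
Variables (beta alpha : R).

Definition incident (v : V) : {set {set V}} := [set e in H | v \in e].
Definition deg (v : V) : nat := #|incident v|.
Definition maxdeg : nat := \max_(v : V) deg v.

Record state := State {
  inC : {set V};
  covered : {set {set V}};
  deal : {set V} -> R;
  delta : {set V} -> R
}.

Definition seqmin (r : V -> R) (s : seq V) : R :=
  match s with
  | [::] => 0
  | v :: s' => foldr (fun u m => Num.min (r u) m) (r v) s'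
  end.

Definition deal0 (e : {set V}) : R :=
  beta * seqmin (fun v => w v / (deg v)%:R) (enum e).
Definition init : state := State finset.set0 finset.set0 deal0 deal0.

Definition residual (s : state) (v : V) : {set {set V}} :=
  [set e in incident v | e \notin covered s].
Definition terminated (s : state) (v : V) : bool :=
  (v \in inC s) || (residual s v == finset.set0).

Definition joiners (s : state) : {set V} :=
  [set v | ~~ terminated s v &
           (1 - beta) * w v <= \sum_(e in incident v) delta s e].

Definition step (s : state) : state :=
  let J := joiners s in
  let cov' := covered s :|: [set e in H | [exists v in e, v \in J]] in
  let raise (e : {set V}) :=
    [forall v in e,
      \sum_(e' in incident v | e' \notin cov') deal s e' <= beta / alpha * w v] in
  let deal' (e : {set V}) :=
    if e \in cov' then deal s e
    else if raise e then alpha * deal s e else deal s e in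
  State (inC s :|: J) cov' deal'
        (fun e => if e \in cov' then delta s e else delta s e + deal' e).

Definition run (n : nat) : state := iter n step init.

End MWHVC.

From HB Require Import structures.
From mathcomp Require Import all_boot all_order all_algebra.
From mathcomp Require Import all_classical all_reals all_analysis.
From mathcomp Require Import ring lra.
Set Implicit Arguments. Unset Strict Implicit. Unset Printing Implicit Defensive.
Import Order.TTheory GRing.Theory Num.Theory.
Local Open Scope ring_scope.

(* Fix a hyperedge e still uncovered after n + 1 iterations and consider the
   potential  log_alpha deal(e) + sum_{v in e} alpha / (beta w(v)) * load(v),
   where load(v) = sum_{e' in E(v)} delta(e').  Every iteration raises it by at
   least 1: either e is raised and deal(e) is multiplied by alpha, or some
   vertex v of e is stuck, so its load grows by more than (beta / alpha) w(v).
   On the other hand deal(e) <= Delta deal_0(e), since e is only raised while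
   alpha deal(e) <= beta w(u) = deg(u) deal_0(e) for the vertex u defining
   deal_0(e), and load(v) < (1 - beta) w(v) as v has not joined the cover.
   Hence n <= log_alpha Delta + f alpha / beta.  With L = ln Delta / ln ln Delta,
   the choice of alpha makes this O(L) when f / beta < L^gamma, and
   O(L + (f^2/eps)^(1/gamma) ln ln Delta) with alpha = 2 otherwise. *)

Lemma seqmin_mem (R : realType) (V : finType) (r : V -> R) (s : seq V) :
  s != [::] -> exists2 u, u \in s & seqmin r s = r u.
Proof.
case: s => [//|v s] _ /=.
elim: s => [|x s [u u_in min_u]] /=; first by exists v; rewrite ?inE.
rewrite min_u; have [_|_] := leP (r x) (r u).
- by exists x; rewrite ?inE ?eqxx ?orbT.
- by exists u => //; rewrite !inE in u_in *; case/orP: u_in => ->; rewrite ?orbT.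
Qed.

Section Analysis.
Variables (R : realType) (V : finType) (H : {set {set V}}) (w : V -> R).
Variables (beta alpha : R).
Hypotheses (beta_gt0 : 0 < beta) (beta_lt1 : beta < 1) (alpha_gt1 : 1 < alpha).
Hypotheses (w_ge0 : forall v, 0 <= w v) (H_neq0 : forall e, e \in H -> e != finset.set0).

Local Notation run i := (run H w beta alpha i).
Local Notation deal0 := (deal0 H w beta).
Local Notation Delta := ((maxdeg H)%:R : R).

Lemma runS i : run i.+1 = step H w beta alpha (run i).
Proof. exact: iterS. Qed.

Lemma covered_runS i : covered (run i.+1) =
  covered (run i) :|: [set e in H | [exists v in e, v \in joiners H w beta (run i)]].
Proof. by []. Qed.

Lemma deg_gt0 v e : e \in H -> v \in e -> (0 < deg H v)%N.
Proof. by move=> eH ve; apply/card_gt0P; exists e; rewrite inE eH ve. Qed.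

Lemma deg_le_maxdeg v : (deg H v <= maxdeg H)%N.
Proof. exact: (@bigop.leq_bigmax V (deg H) v). Qed.

Lemma deal0_ge0 e : 0 <= deal0 e.
Proof.
rewrite /deal0 mulr_ge0 ?(ltW beta_gt0) //.
have [->//|enum_neq0] := eqVneq (enum e) [::].
by have [u _ ->] := seqmin_mem (fun v => w v / (deg H v)%:R) enum_neq0;
  rewrite divr_ge0.
Qed.

Lemma deal0_attained e : e \in H ->
  exists2 u, u \in e & deal0 e = beta * (w u / (deg H u)%:R).
Proof.
move=> eH; have enum_neq0 : enum e != [::].
  by case/finset.set0Pn: (H_neq0 eH) => x; rewrite -mem_enum; case: (enum e).
have [u u_in min_u] := seqmin_mem (fun v => w v / (deg H v)%:R) enum_neq0.
by exists u; [rewrite -mem_enum | rewrite /deal0 min_u].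
Qed.

Lemma deal0_le_deal i e : deal0 e <= deal (run i) e.
Proof.
elim: i => [|i IH] //; rewrite runS.
have deal_ge0 := le_trans (deal0_ge0 e) IH.
apply: le_trans IH _; rewrite /step /=; case: ifP => // _; case: ifP => // _.
by rewrite ler_peMl // ltW.
Qed.

Lemma deal_ge0 i e : 0 <= deal (run i) e.
Proof. exact: le_trans (deal0_ge0 e) (deal0_le_deal i e). Qed.

Definition load (st : state R V) (v : V) : R := \sum_(e in incident H v) delta st e.

Lemma load_runS i v :
  load (run i) v + \sum_(e in incident H v | e \notin covered (run i.+1)) deal (run i) e
  <= load (run i.+1) v.
Proof.
rewrite /load big_mkcondr -big_split /=; apply: ler_sum => e _.
case: (e \in _) => /=; first by rewrite addr0.
rewrite lerD2l; case: ifP => // _.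
by rewrite ler_peMl ?deal_ge0 ?ltW.
Qed.

Lemma load_le_runS i v : load (run i) v <= load (run i.+1) v.
Proof.
apply: le_trans (load_runS i v); rewrite lerDl sumr_ge0 // => e _.
exact: deal_ge0.
Qed.

Lemma load_ge0 i v : 0 <= load (run i) v.
Proof.
elim: i => [|i IH]; last exact: le_trans IH (load_le_runS i v).
by rewrite sumr_ge0 // => e _; apply: deal0_ge0.
Qed.

Lemma covered_mono i j : (i <= j)%N -> covered (run i) \subset covered (run j).
Proof.
move=> /subnK <-; elim: (j - i)%N => [|k IH] //.
by rewrite addSn covered_runS; apply: fintype.subset_trans IH (finset.subsetUl _ _).
Qed.

Lemma covered_sub i : covered (run i) \subset H.
Proof.
elim: i => [|i IH]; first exact: finset.sub0set.
rewrite covered_runS finset.subUset IH /=.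
by apply/fintype.subsetP => e; rewrite inE => /andP [].
Qed.

Lemma inC_covered i v e : v \in inC (run i) -> e \in H -> v \in e -> e \in covered (run i).
Proof.
elim: i => [|i IH]; first by rewrite inE.
rewrite runS /= => /finset.setUP [/IH vC|vJ] eH ve; apply/finset.setUP.
  by left; apply: vC.
by right; rewrite inE eH; apply/existsP; exists v; rewrite ve.
Qed.

Lemma load_lt_uncovered i e v : e \in H -> e \notin covered (run i.+1) -> v \in e ->
  load (run i) v < (1 - beta) * w v.
Proof.
move=> eH e_unc ve.
have e_unc_i : e \notin covered (run i).
  by apply: contra e_unc; apply/fintype.subsetP/covered_mono.
have v_active : ~~ terminated H (run i) v.
  rewrite negb_or; apply/andP; split.
    by apply: contra e_unc_i => vC; apply: inC_covered vC eH ve.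
  by apply/finset.set0Pn; exists e; rewrite !inE eH ve.
have : v \notin joiners H w beta (run i).
  apply: contra e_unc => vJ; rewrite covered_runS inE inE eH; apply/orP; right.
  by apply/existsP; exists v; rewrite ve.
by rewrite inE v_active /= -ltNge.
Qed.

Lemma w_gt0_uncovered i e v : e \in H -> e \notin covered (run i.+1) -> v \in e -> 0 < w v.
Proof.
move=> eH e_unc ve.
have e_unc1 : e \notin covered (run 1).
  by apply: contra e_unc; apply/fintype.subsetP/covered_mono.
have := le_lt_trans (load_ge0 0 v) (load_lt_uncovered eH e_unc1 ve).
by rewrite pmulr_rgt0 // subr_gt0.
Qed.

Lemma raise_or_stuck i e : e \in H -> e \notin covered (run i.+1) ->
  (deal (run i.+1) e = alpha * deal (run i) e /\
     forall v, v \in e -> alpha * deal (run i) e <= beta * w v)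
  \/ (deal (run i.+1) e = deal (run i) e /\ exists2 v, v \in e &
        beta / alpha * w v <
          \sum_(e' in incident H v | e' \notin covered (run i.+1)) deal (run i) e').
Proof.
move=> eH e_unc; rewrite runS /step /=.
case: ifP => [e_cov|_]; first by rewrite covered_runS e_cov in e_unc.
case: ifP => [/forallP raise|/negbT stuck]; [left|right]; split=> //.
- move=> v ve; move: (raise v); rewrite ve /= => sum_le.
  rewrite -ler_pdivlMl ?(lt_trans ltr01) // mulrA [_^-1 * _]mulrC.
  apply: le_trans sum_le; rewrite (bigD1 e) /=; last by rewrite e_unc !inE eH ve.
  by rewrite lerDl sumr_ge0 // => e' _; apply: deal_ge0.
- move: stuck; rewrite negb_forall => /existsP [v].
  by rewrite negb_imply -ltNge => /andP [ve lt_v]; exists v.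
Qed.

Lemma deal_le_maxdeg i e : e \in H -> deal (run i) e <= Delta * deal0 e.
Proof.
move=> eH; have [u ue deal0_u] := deal0_attained eH.
have deg_u_gt0 : (deg H u)%:R != 0 :> R by rewrite pnatr_eq0 -lt0n (deg_gt0 eH ue).
have w_u : beta * w u = (deg H u)%:R * deal0 e by rewrite deal0_u; field.
have bound_u : beta * w u <= Delta * deal0 e.
  by rewrite w_u ler_wpM2r ?deal0_ge0 // ler_nat deg_le_maxdeg.
elim: i => [|i IH].
  apply: le_trans bound_u; rewrite w_u ler_peMl ?deal0_ge0 //.
  by rewrite (ler_nat _ 1) (deg_gt0 eH ue).
have [e_cov|e_unc] := boolP (e \in covered (run i.+1)).
  by rewrite runS /step /= -covered_runS e_cov.
have [[-> raise_le]|[-> _]] := raise_or_stuck eH e_unc => //.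
exact: le_trans (raise_le u ue) bound_u.
Qed.

Lemma deal_gt0_uncovered j i e : e \in H -> e \notin covered (run i.+1) ->
  0 < deal (run j) e.
Proof.
move=> eH e_unc; apply: lt_le_trans (deal0_le_deal j e).
have [u ue ->] := deal0_attained eH.
by rewrite mulr_gt0 // divr_gt0 ?(w_gt0_uncovered eH e_unc ue) // ltr0n (deg_gt0 eH ue).
Qed.

Lemma maxdeg_gt0 e : e \in H -> (0 < maxdeg H)%N.
Proof.
move=> eH; case/finset.set0Pn: (H_neq0 eH) => v ve.
exact: leq_trans (deg_gt0 eH ve) (deg_le_maxdeg v).
Qed.

Lemma weighted_load_le_runS i (P : pred V) (c : V -> R) :
  (forall v, P v -> 0 <= c v) ->
  \sum_(v | P v) c v * load (run i) v <= \sum_(v | P v) c v * load (run i.+1) v.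
Proof.
by move=> c_ge0; apply: ler_sum => v Pv; rewrite ler_wpM2l ?c_ge0 ?load_le_runS.
Qed.

Definition potential (e : {set V}) (st : state R V) : R :=
  ln (deal st e) / ln alpha + \sum_(v in e) alpha / (beta * w v) * load st v.

Lemma potential_runS i e : e \in H -> e \notin covered (run i.+1) ->
  potential e (run i) + 1 <= potential e (run i.+1).
Proof.
move=> eH e_unc.
have alpha_gt0 : 0 < alpha := lt_trans ltr01 alpha_gt1.
have w_gt0 v : v \in e -> 0 < w v by apply: w_gt0_uncovered eH e_unc.
have coef_ge0 v : v \in e -> 0 <= alpha / (beta * w v).
  by move=> ve; rewrite ltW // divr_gt0 ?mulr_gt0 ?w_gt0.
rewrite /potential; have [[-> _]|[-> [v ve stuck_v]]] := raise_or_stuck eH e_unc.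
- have deal_gt0 : 0 < deal (run i) e := deal_gt0_uncovered i eH e_unc.
  rewrite lnM ?posrE // mulrDl divff ?gt_eqF ?ln_gt0 //.
  have := weighted_load_le_runS i coef_ge0; lra.
- have unit_gain : alpha / (beta * w v) * (beta / alpha * w v) = 1.
    by field; rewrite !gt_eqF ?w_gt0.
  have jump : alpha / (beta * w v) * load (run i) v + 1
      <= alpha / (beta * w v) * load (run i.+1) v.
    rewrite -[X in _ + X]unit_gain -mulrDr ler_wpM2l ?coef_ge0 //.
    by apply: le_trans (load_runS i v); rewrite lerD2l ltW.
  have rest : \sum_(x in e | x != v) alpha / (beta * w x) * load (run i) x
      <= \sum_(x in e | x != v) alpha / (beta * w x) * load (run i.+1) x.
    by apply: weighted_load_le_runS => x /andP [/coef_ge0].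
  rewrite -addrA lerD2l (bigD1 v) //= [X in _ <= X](bigD1 v) //=.
  lra.
Qed.

Lemma potential0_ge e : e \in H -> e \notin covered (run 1) ->
  ln (deal0 e) / ln alpha <= potential e (run 0).
Proof.
move=> eH e_unc; rewrite lerDl sumr_ge0 // => v ve.
have w_gt0 := w_gt0_uncovered eH e_unc ve.
by rewrite mulr_ge0 ?load_ge0 // ltW // divr_gt0 ?mulr_gt0 // (lt_trans ltr01).
Qed.

Lemma potential_le i e f : e \in H -> (#|e| <= f)%N -> e \notin covered (run i.+1) ->
  potential e (run i) <= ln (Delta * deal0 e) / ln alpha + f%:R * (alpha / beta).
Proof.
move=> eH e_f e_unc; have alpha_gt0 : 0 < alpha := lt_trans ltr01 alpha_gt1.
have Delta_gt0 : 0 < Delta by rewrite ltr0n (maxdeg_gt0 eH).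
have deal0_gt0 : 0 < deal0 e := deal_gt0_uncovered 0 eH e_unc.
apply: lerD.
  rewrite ler_wpM2r ?invr_ge0 ?ln_ge0 ?(ltW alpha_gt1) // ler_ln ?posrE.
  - exact: deal_le_maxdeg.
  - exact: (deal_gt0_uncovered i eH e_unc).
  - exact: mulr_gt0.
apply: (@le_trans _ _ (\sum_(v in e) alpha / beta)); last first.
  rewrite sumr_const -[_ *+ _]mulr_natl ler_wpM2r ?ler_nat //.
  by rewrite divr_ge0 ?(ltW alpha_gt0) ?(ltW beta_gt0).
apply: ler_sum => v ve; have w_gt0 := w_gt0_uncovered eH e_unc ve.
have coef_gt0 : 0 < alpha / (beta * w v) by rewrite divr_gt0 ?mulr_gt0.
apply: le_trans (ler_wpM2l (ltW coef_gt0) (ltW (load_lt_uncovered eH e_unc ve))) _.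
have -> : alpha / (beta * w v) * ((1 - beta) * w v) = alpha / beta * (1 - beta).
  by field; rewrite !gt_eqF.
by rewrite mulrBr mulr1 gerBl mulr_ge0 ?divr_ge0 ?(ltW alpha_gt0) ?(ltW beta_gt0).
Qed.

Lemma uncovered_rounds_le n e f : e \in H -> (#|e| <= f)%N ->
  e \notin covered (run n.+1) -> n%:R <= ln Delta / ln alpha + f%:R * (alpha / beta).
Proof.
move=> eH e_f e_unc.
have e_unc_before k : (k <= n)%N -> e \notin covered (run k.+1).
  by move=> le_kn; apply: contra e_unc; apply/fintype.subsetP/covered_mono.
have growth k : (k <= n)%N -> potential e (run 0) + k%:R <= potential e (run k).
  elim: k => [|k IH] le_kn; first by rewrite addr0.
  apply: le_trans (potential_runS eH (e_unc_before k (ltnW le_kn))).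
  by rewrite -natr1 addrA lerD2r IH // ltnW.
have Delta_gt0 : 0 < Delta by rewrite ltr0n (maxdeg_gt0 eH).
have deal0_gt0 : 0 < deal0 e := deal_gt0_uncovered 0 eH e_unc.
have := potential0_ge eH (e_unc_before 0%N isT).
have := potential_le eH e_f e_unc.
have := growth n (leqnn n).
rewrite lnM ?posrE // mulrDl; lra.
Qed.

Lemma covered_run_eq T f : (forall e, e \in H -> (#|e| <= f)%N) ->
  1 + ln Delta / ln alpha + f%:R * (alpha / beta) < T%:R -> covered (run T) = H.
Proof.
move=> H_f T_large; apply/eqP; rewrite finset.eqEsubset covered_sub /=.
apply/fintype.subsetP => e eH; apply/negPn/negP => e_unc.
have alpha_gt0 : 0 < alpha := lt_trans ltr01 alpha_gt1.
have Delta_ge1 : 1 <= Delta by rewrite (ler_nat _ 1) (maxdeg_gt0 eH).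
have : 0 <= ln Delta / ln alpha + f%:R * (alpha / beta).
  apply: addr_ge0; first by rewrite divr_ge0 ?ln_ge0 ?(ltW alpha_gt1).
  by rewrite mulr_ge0 ?divr_ge0 ?(ltW alpha_gt0) ?(ltW beta_gt0).
case: T T_large e_unc => [|n] T_large e_unc; first lra.
have := uncovered_rounds_le eH (H_f e eH) e_unc.
rewrite -natr1 in T_large; lra.
Qed.

Lemma rank_gt0 f : (forall e, e \in H -> (#|e| <= f)%N) -> (0 < maxdeg H)%N -> (0 < f)%N.
Proof.
move=> H_f; apply: contraTT; rewrite -!eqn0Ngt => /eqP f0.
rewrite /maxdeg big1 // => v _; apply/eqP; rewrite cards_eq0; apply/eqP/setP => e.
rewrite !inE; apply/negP => /andP [eH ve].
by move: (H_f e eH); rewrite f0 leqn0 cards_eq0 => /eqP e0; rewrite e0 inE in ve.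
Qed.

End Analysis.

Lemma expR1_lt3 (R : realType) : expR 1 < 3 :> R.
Proof.
have expR_sixth : expR (1 / 6) <= 6 / 5 :> R.
  have : 1 - 1 / 6 <= expR (- (1 / 6)) :> R by rewrite expR_ge1Dx.
  rewrite expRN -[X in _ <= X -> _]div1r ler_pdivlMr ?expR_gt0 //; lra.
have -> : (1 : R) = 6%:R * (1 / 6) by rewrite mul1r divff.
rewrite expRM_natl.
apply: le_lt_trans (lerXn2r 6 _ _ expR_sixth) _; rewrite ?nnegrE ?expR_ge0 //.
by rewrite !exprS expr0; lra.
Qed.

Lemma ln3_gt1 (R : realType) : 1 < ln 3 :> R.
Proof. by rewrite -ltr_expR lnK ?posrE // expR1_lt3. Qed.

Lemma ln_le_half (R : realType) (y : R) : 0 < y -> 2 * ln y <= y.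
Proof.
move=> y_gt0; set t := Num.sqrt y.
have t_gt0 : 0 < t by rewrite sqrtr_gt0.
have y_tt : y = t * t by rewrite -expr2 sqr_sqrtr // ltW.
have ln_t : ln t <= t - 1.
  by have := @le_ln1Dx R (t - 1); rewrite [1 + _]addrC subrK; apply; lra.
have := sqr_ge0 (t - 2); rewrite expr2 => sq_ge0.
rewrite {1 2}y_tt lnM ?posrE //; lra.
Qed.

(* [2 + 2 / (1 - gamma)] serves the case alpha = L^(1 - gamma), the remaining
   terms the case alpha = 2. *)
Definition round_constant (R : realType) (gamma : R) : R :=
  2 + 2 / (1 - gamma) + 2 `^ gamma^-1 / ln 2 + 4 / ln (ln 3).

Lemma round_constant_gt0 (R : realType) (gamma : R) :
  gamma < 1 -> 0 < round_constant gamma.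
Proof.
move=> gamma_lt1.
by rewrite !addr_gt0 ?divr_gt0 ?powR_gt0 ?ln_gt0 ?subr_gt0 ?ln3_gt1 // (ltr_nat _ 1 2).
Qed.

Lemma div_ln_gt1 (R : realType) (x : R) : 1 < x -> 1 < x / ln x.
Proof.
move=> x_gt1; have lnx_gt0 := ln_gt0 x_gt1.
by rewrite ltr_pdivlMr // mul1r ln_sublinear // (lt_trans ltr01).
Qed.

Lemma ln_div_ln_ge (R : realType) (x : R) : 1 < x -> ln x / 2 <= ln (x / ln x).
Proof.
move=> x_gt1; have lnx_gt0 := ln_gt0 x_gt1.
rewrite ln_div ?posrE ?(lt_trans ltr01 x_gt1) //.
have := ln_le_half lnx_gt0; lra.
Qed.

Lemma small_rank_rounds (R : realType) (gamma x r : R) :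
  gamma < 1 -> 1 < x -> r < (x / ln x) `^ gamma ->
  let L := x / ln x in let alpha := L `^ (1 - gamma) in
  1 < alpha /\ 1 + x / ln alpha + r * alpha < (2 + 2 / (1 - gamma)) * L.
Proof.
move=> gamma_lt1 x_gt1 r_lt L alpha.
have L_gt1 : 1 < L := div_ln_gt1 x_gt1.
have lnx_gt0 := ln_gt0 x_gt1.
have lnL_ge := ln_div_ln_ge x_gt1; rewrite -/L in lnL_ge.
have ln_alpha : ln alpha = (1 - gamma) * ln L by rewrite ln_powR.
have ln_alpha_gt0 : 0 < ln alpha by rewrite ln_alpha mulr_gt0 ?subr_gt0 ?ln_gt0.
split; first by rewrite -[alpha]lnK ?posrE ?powR_gt0 ?(lt_trans ltr01) // expR_gt1.
have split_L : L `^ gamma * alpha = L.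
  rewrite -powRD ?(gt_eqF (lt_trans ltr01 L_gt1)) ?implybT //.
  by rewrite addrC subrK powRr1 // ltW // (lt_trans ltr01).
have r_alpha : r * alpha < L.
  by rewrite -[X in _ < X]split_L ltr_pM2r ?powR_gt0 ?(lt_trans ltr01).
have x_ln_alpha : x / ln alpha <= 2 / (1 - gamma) * L.
  have -> : 2 / (1 - gamma) * L = x / ((1 - gamma) * (ln x / 2)).
    by rewrite /L; field; rewrite !gt_eqF ?subr_gt0.
  rewrite ln_alpha ler_wpM2l ?(ltW (lt_trans ltr01 x_gt1)) // lef_pV2 ?posrE.
  - by rewrite ler_pM2l ?subr_gt0.
  - by rewrite -ln_alpha.
  - by rewrite mulr_gt0 ?divr_gt0 ?subr_gt0.
lra.
Qed.

Lemma large_rank_rounds (R : realType) (gamma x a r : R) :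
  0 < gamma <= 1 -> ln 3 <= x -> 1 <= a ->
  (x / ln x) `^ gamma <= r -> r <= 2 * a ->
  1 + x / ln 2 + 2 * r <
    2 * (x / ln x) + (2 `^ gamma^-1 / ln 2 + 4 / ln (ln 3)) * (a `^ gamma^-1 * ln x).
Proof.
move=> /andP [gamma_gt0 gamma_le1] x_ge a_ge1 L_le r_le.
have ln3_gt1 := ln3_gt1 R; have x_gt1 : 1 < x by lra.
set L := x / ln x; set M := a `^ gamma^-1; set c := ln (ln (3 : R)).
have L_gt1 : 1 < L := div_ln_gt1 x_gt1.
have c_gt0 : 0 < c := ln_gt0 ln3_gt1.
have c_le : c <= ln x by rewrite ler_ln ?posrE //; lra.
have ln2_gt0 : 0 < ln (2 : R) by rewrite ln_gt0 //; lra.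
have a_le_M : a <= M by rewrite le1r_powR // invf_ge1.
have L_le_M : L <= 2 `^ gamma^-1 * M.
  rewrite -powRM ?(le_trans ler01) //; last lra.
  have -> : L = (L `^ gamma) `^ gamma^-1.
    by rewrite -powRrM mulfV ?lt0r_neq0 // powRr1 // ltW // (lt_trans ltr01).
  rewrite ge0_ler_powR ?nnegrE ?invr_ge0 ?powR_ge0 ?(ltW gamma_gt0) //; lra.
have term_D : x / ln 2 <= 2 `^ gamma^-1 / ln 2 * (M * ln x).
  have lnx_gt0 : 0 < ln x by lra.
  rewrite -[X in X / ln 2](@mulfVK _ (ln x)) ?gt_eqF // -/L.
  by rewrite mulrAC mulrA ler_pM2r // [_ * M]mulrAC ler_pM2r ?invr_gt0.
have term_r : 2 * r <= 4 / c * (M * ln x).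
  have : M <= M * (ln x / c) by rewrite ler_peMr ?powR_ge0 // ler_pdivlMr // mul1r.
  have -> : 4 / c * (M * ln x) = 4 * (M * (ln x / c)) by field; rewrite gt_eqF.
  lra.
rewrite mulrDl; lra.
Qed.

Lemma rounds_estimate (R : realType) (gamma eps D f : R) :
  0 < gamma < 1 -> 1 <= f -> 0 < eps <= 1 -> 3 <= D ->
  let beta := eps / (f + eps) in
  let L := ln D / ln (ln D) in
  let alpha := if f / beta < L `^ gamma then L `^ (1 - gamma) else 2 in
  [/\ 0 < beta, beta < 1, 1 < alpha &
     1 + ln D / ln alpha + f * (alpha / beta) <
       round_constant gamma * (L + (f ^+ 2 / eps) `^ gamma^-1 * ln (ln D))].
Proof.
move=> gamma01 f_ge1 /andP [eps_gt0 eps_le1] D_ge3 beta L alpha.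
have /andP [gamma_gt0 gamma_lt1] := gamma01.
have ln3_gt1 := ln3_gt1 R.
have lnD_ge : ln 3 <= ln D by rewrite ler_ln ?posrE //; lra.
have lnD_gt1 : 1 < ln D by lra.
have L_gt1 : 1 < L := div_ln_gt1 lnD_gt1.
have beta_gt0 : 0 < beta by rewrite divr_gt0 //; lra.
have beta_lt1 : beta < 1 by rewrite ltr_pdivrMr; lra.
set P := (f ^+ 2 / eps) `^ gamma^-1 * ln (ln D).
have P_ge0 : 0 <= P by rewrite mulr_ge0 ?powR_ge0 ?ln_ge0 //; lra.
have A_ge0 : 0 <= 2 / (1 - gamma) by rewrite divr_ge0 //; lra.
have B_ge0 : 0 <= 2 `^ gamma^-1 / ln 2 by rewrite divr_ge0 ?powR_ge0 ?ln_ge0 //; lra.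
have C_ge0 : 0 <= 4 / ln (ln 3) :> R by rewrite divr_ge0 ?ln_ge0 //; lra.
rewrite /round_constant; set K := (2 + _ + _ + _).
have L_ge0 : 0 <= L by rewrite ltW // (lt_trans ltr01).
rewrite /alpha; case: ifP => [small|/negbT]; last rewrite -leNgt => large.
- have [alpha_gt1 bound] := small_rank_rounds gamma_lt1 lnD_gt1 small.
  split=> //.
  have -> : f * (L `^ (1 - gamma) / beta) = f / beta * L `^ (1 - gamma) by ring.
  apply: lt_le_trans bound (le_trans (_ : _ <= K * L) _).
    by rewrite ler_wpM2r // /K; lra.
  by rewrite ler_wpM2l /K; lra.
- have a_ge1 : 1 <= f ^+ 2 / eps by rewrite ler_pdivlMr // mul1r expr2; nra.
  have r_le : f / beta <= 2 * (f ^+ 2 / eps).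
    rewrite /beta invf_div mulrA mulrA ler_pM2r ?invr_gt0 // expr2; nra.
  have gamma_01 : 0 < gamma <= 1 by rewrite gamma_gt0 ltW.
  have := large_rank_rounds gamma_01 lnD_ge a_ge1 large r_le.
  rewrite -/L -/P [f * (2 / _)]mulrCA => bound.
  split=> //; first lra.
  apply: lt_le_trans bound _; rewrite [_ * (L + P)]mulrDr.
  by apply: lerD; rewrite ler_wpM2r // /K; lra.
Qed.

Theorem mainTheorem9 (R : realType) (gamma : R) :
  0 < gamma < 1 ->
  exists K : R, 0 < K /\
  forall (V : finType) (H : {set {set V}}) (f : nat) (w : V -> R) (eps : R),
    (forall e, e \in H -> e != finset.set0 /\ (#|e| <= f)%N) ->
    (forall v, 0 <= w v) ->
    (3 <= maxdeg H)%N ->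
    0 < eps <= 1 ->
    let Delta : R := (maxdeg H)%:R in
    let beta : R := eps / (f%:R + eps) in
    let L : R := ln Delta / ln (ln Delta) in
    let alpha : R := if f%:R / beta < L `^ gamma then L `^ (1 - gamma) else 2 in
    forall i : nat,
      K * (L + (f%:R ^+ 2 / eps) `^ gamma^-1 * ln (ln Delta)) <= i%:R ->
      covered (run H w beta alpha i) = H.
Proof.
move=> gamma01; exists (round_constant gamma); split.
  by apply: round_constant_gt0; case/andP: gamma01.
move=> V H f w eps H_ok w_ge0 maxdeg_ge3 eps01 Delta beta L alpha i i_large.
have H_f e : e \in H -> (#|e| <= f)%N by case/H_ok.
have f_ge1 : 1 <= f%:R :> R.
  by rewrite (ler_nat _ 1) (rank_gt0 H_f) // (leq_trans _ maxdeg_ge3).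
have Delta_ge3 : 3 <= Delta by rewrite (ler_nat _ 3).
have [beta_gt0 beta_lt1 alpha_gt1 rounds_lt] :=
  rounds_estimate gamma01 f_ge1 eps01 Delta_ge3.
apply: (covered_run_eq beta_gt0 beta_lt1 alpha_gt1 w_ge0 _ H_f).
  by move=> e /H_ok [].
exact: lt_le_trans rounds_lt i_large.
Qed.
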